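(* Let $\mathbb{H}$ be a finite dimensional real Hilbert space, $\epsilon\in[0,1)$, and $T\in\mathbb{B}(\mathbb{H})$. Then for any $A\in\mathbb{B}(\mathbb{H})$, $T\perp_B^{\epsilon}A$ if and only if $|\langle Tx,Ax\rangle|\le\epsilon\|T\|\|A\|$ for some $x\in M_T$. Moreover, if $M_T\subseteq M_A$, then $T\perp_B^{\epsilon}A$ if and only if $Tx\perp^{\epsilon}Ax$ for some $x\in M_T$.
   Context: $M_T=\{x\in\mathbb{H}:\|x\|=1,\ \|Tx\|=\|T\|\}$. For $\epsilon\in[0,1)$ and $u,v$ in a normed space, $u\perp_B^{\epsilon}v$ means $\|u+\lambda v\|^2\ge\|u\|^2-2\epsilon\|u\|\|\lambda v\|$ for all $\lambda\in\mathbb{R}$ (operators are taken with the operator norm). In an inner product space, $x\perp^{\epsilon}y$ means $|\langle x,y\rangle|\le\epsilon\|x\|\|y\|$. *)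

(* The finite-dimensional real Hilbert space H is modelled as R^n (n >= 1)
   with the standard inner product; vectors are nat -> R (only coordinates
   0..n-1 matter), bounded operators are n x n real matrices (nat -> nat -> R,
   only entries with indices < n matter), acting by matrix-vector product. *)
From Stdlib Require Import Reals Lra ClassicalEpsilon.
Open Scope R_scope.

Definition vec := nat -> R.
Definition mat := nat -> nat -> R.

Fixpoint rsum (n : nat) (f : nat -> R) : R :=
  match n with O => 0 | S k => rsum k f + f k end.

Definition inner (n : nat) (x y : vec) : R := rsum n (fun i => x i * y i).
Definition vnorm (n : nat) (x : vec) : R := sqrt (inner n x x).

Definition app (n : nat) (T : mat) (x : vec) : vec :=
  fun i => rsum n (fun j => T i j * x j).

Definition madd (T A : mat) : mat := fun i j => T i j + A i j.
Definition mscale (l : R) (A : mat) : mat := fun i j => l * A i j.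

Definition opnorm (n : nat) (T : mat) : R :=
  epsilon (inhabits 0)
    (fun r => is_lub (fun y => exists x : vec, vnorm n x = 1 /\ y = vnorm n (app n T x)) r).

Definition MT (n : nat) (T : mat) (x : vec) : Prop :=
  vnorm n x = 1 /\ vnorm n (app n T x) = opnorm n T.

Definition BJ_eps (n : nat) (eps : R) (T A : mat) : Prop :=
  forall l : R,
    opnorm n (madd T (mscale l A)) ^ 2
      >= opnorm n T ^ 2 - 2 * eps * opnorm n T * opnorm n (mscale l A).

Definition iperp_eps (n : nat) (eps : R) (x y : vec) : Prop :=
  Rabs (inner n x y) <= eps * vnorm n x * vnorm n y.

(* Testing [|T + l A|] on a unit vector [x] with [|Tx| = |T|] gives
   [|T + l A|^2 >= |T|^2 + 2 l <Tx, Ax>], which yields the backward direction.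
   Conversely, if [T] is eps-orthogonal to [A], unit vectors that almost maximise
   [|(T + t A) x|] accumulate, as [t -> 0+], at some [x+] in M_T with
   [<Tx+, Ax+> >= - eps |T| |A|]; applied to [-A] this gives [x-] in M_T with
   [<Tx-, Ax-> <= eps |T| |A|].  If neither point works, [<Tx, Ax>] takes both signs on
   M_T.  But M_T is the unit sphere of the subspace on which the positive semidefinite
   form [|T|^2 |x|^2 - |Tx|^2] vanishes, and [<Tx, Ax>] is even, so the intermediate
   value theorem on a segment produces a zero of [<Tx, Ax>] on M_T.  When M_T is
   contained in M_A, [|Tx| = |T|] and [|Ax| = |A|] turn the first statement into the
   second. *)

From Stdlib Require Import Reals Lra Lia Psatz Ranalysis ClassicalEpsilon FunctionalExtensionality.
Open Scope R_scope.

Lemma rsum_ext n f g : (forall i, (i < n)%nat -> f i = g i) -> rsum n f = rsum n g.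
Proof.
  induction n as [|n IH]; intros H; simpl; [reflexivity|].
  rewrite IH by (intros; apply H; lia). rewrite H by lia. reflexivity.
Qed.

Lemma rsum_lin n a b f g :
  rsum n (fun i => a * f i + b * g i) = a * rsum n f + b * rsum n g.
Proof. induction n as [|n IH]; simpl; [ring|]. rewrite IH; ring. Qed.

Lemma rsum_scal n a f : rsum n (fun i => a * f i) = a * rsum n f.
Proof. induction n as [|n IH]; simpl; [ring|]. rewrite IH; ring. Qed.

Lemma rsum_zero n : rsum n (fun _ => 0) = 0.
Proof. induction n as [|n IH]; simpl; [reflexivity|]. rewrite IH; ring. Qed.

Lemma rsum_le n f g : (forall i, (i < n)%nat -> f i <= g i) -> rsum n f <= rsum n g.
Proof.
  induction n as [|n IH]; intros H; simpl; [lra|].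
  assert (f n <= g n) by (apply H; lia).
  assert (rsum n f <= rsum n g) by (apply IH; intros; apply H; lia).
  lra.
Qed.

Lemma rsum_nonneg n f : (forall i, (i < n)%nat -> 0 <= f i) -> 0 <= rsum n f.
Proof. intros H. rewrite <- (rsum_zero n). now apply rsum_le. Qed.

Lemma rsum_term_le n f i :
  (forall j, (j < n)%nat -> 0 <= f j) -> (i < n)%nat -> f i <= rsum n f.
Proof.
  induction n as [|n IH]; intros H Hi; [lia|]. simpl.
  assert (0 <= f n) by (apply H; lia).
  destruct (Nat.eq_dec i n) as [->|Hne].
  - assert (0 <= rsum n f) by (apply rsum_nonneg; intros; apply H; lia). lra.
  - assert (f i <= rsum n f) by (apply IH; [intros; apply H|]; lia). lra.
Qed.

Lemma Rabs_rsum_le n f : Rabs (rsum n f) <= rsum n (fun i => Rabs (f i)).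
Proof.
  induction n as [|n IH]; simpl; [rewrite Rabs_R0; lra|].
  eapply Rle_trans; [apply Rabs_triang|]. lra.
Qed.

Definition vlc (a : R) (x : vec) (b : R) (y : vec) : vec := fun i => a * x i + b * y i.
Definition vscal (a : R) (x : vec) : vec := fun i => a * x i.

Lemma inner_sym n x y : inner n x y = inner n y x.
Proof. apply rsum_ext; intros; ring. Qed.

Lemma inner_lc_l n a x b y z : inner n (vlc a x b y) z = a * inner n x z + b * inner n y z.
Proof. unfold inner, vlc. rewrite <- rsum_lin. apply rsum_ext; intros; ring. Qed.

Lemma inner_lc_r n a x b y z : inner n z (vlc a x b y) = a * inner n z x + b * inner n z y.
Proof. rewrite inner_sym, inner_lc_l, (inner_sym n x), (inner_sym n y). reflexivity. Qed.

Lemma inner_lc_lc n a x b y :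
  inner n (vlc a x b y) (vlc a x b y) =
  a ^ 2 * inner n x x + 2 * a * b * inner n x y + b ^ 2 * inner n y y.
Proof. rewrite !inner_lc_l, !inner_lc_r, (inner_sym n y x). ring. Qed.

Lemma inner_scal n a x b y : inner n (vscal a x) (vscal b y) = a * b * inner n x y.
Proof. unfold inner, vscal. rewrite <- rsum_scal. apply rsum_ext; intros; ring. Qed.

Lemma inner_scal_r n x b y : inner n x (vscal b y) = b * inner n x y.
Proof. unfold inner, vscal. rewrite <- rsum_scal. apply rsum_ext; intros; ring. Qed.

Lemma inner_self_nonneg n x : 0 <= inner n x x.
Proof. apply rsum_nonneg; intros; nra. Qed.

Lemma coord_sq_le_inner n x i : (i < n)%nat -> x i * x i <= inner n x x.
Proof. intros Hi. apply (rsum_term_le n (fun j => x j * x j)); auto. intros; nra. Qed.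

Lemma Rabs_inner_le n u v : 2 * Rabs (inner n u v) <= inner n u u + inner n v v.
Proof.
  pose proof (inner_self_nonneg n (vlc 1 u 1 v)) as Hp.
  pose proof (inner_self_nonneg n (vlc 1 u (-1) v)) as Hm.
  rewrite inner_lc_lc in Hp, Hm.
  unfold Rabs; destruct Rcase_abs; nra.
Qed.

Lemma app_lc n T a x b y : app n T (vlc a x b y) = vlc a (app n T x) b (app n T y).
Proof.
  apply functional_extensionality; intro i. unfold app, vlc.
  rewrite <- rsum_lin. apply rsum_ext; intros; ring.
Qed.

Lemma app_scal n T a x : app n T (vscal a x) = vscal a (app n T x).
Proof.
  apply functional_extensionality; intro i. unfold app, vscal.
  rewrite <- rsum_scal. apply rsum_ext; intros; ring.
Qed.

Lemma app_mscale n l A x : app n (mscale l A) x = vscal l (app n A x).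
Proof.
  apply functional_extensionality; intro i. unfold app, mscale, vscal.
  rewrite <- rsum_scal. apply rsum_ext; intros; ring.
Qed.

Lemma app_madd_mscale n T A l x :
  app n (madd T (mscale l A)) x = vlc 1 (app n T x) l (app n A x).
Proof.
  apply functional_extensionality; intro i. unfold app, madd, mscale, vlc.
  rewrite <- rsum_lin. apply rsum_ext; intros; ring.
Qed.

Lemma vnorm_nonneg n x : 0 <= vnorm n x.
Proof. apply sqrt_pos. Qed.

Lemma vnorm_sq n x : vnorm n x ^ 2 = inner n x x.
Proof. unfold vnorm. rewrite <- Rsqr_pow2. apply Rsqr_sqrt, inner_self_nonneg. Qed.

Lemma vnorm_eq1 n x : vnorm n x = 1 <-> inner n x x = 1.
Proof.
  rewrite <- vnorm_sq. pose proof (vnorm_nonneg n x) as Hnn.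
  split; intros H; [rewrite H; ring | nra].
Qed.

Lemma vnorm_mscale n l A x : vnorm n (app n (mscale l A) x) = Rabs l * vnorm n (app n A x).
Proof.
  unfold vnorm. rewrite app_mscale, inner_scal.
  rewrite sqrt_mult_alt by apply Rle_0_sqr. now rewrite <- (sqrt_Rsqr_abs l).
Qed.

Lemma exists_unit_vec n : (1 <= n)%nat -> exists x, inner n x x = 1.
Proof.
  intros Hn. exists (fun i => if Nat.eqb i 0 then 1 else 0).
  induction n as [|[|n] IH]; [lia | unfold inner; simpl; ring |].
  unfold inner in *; simpl in *. rewrite IH by lia. ring.
Qed.

Lemma app_sq_bounded n T :
  exists C, forall x, inner n x x = 1 -> inner n (app n T x) (app n T x) <= C.
Proof.
  exists (rsum n (fun i => rsum n (fun j => Rabs (T i j)) ^ 2)).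
  intros x Hx. apply rsum_le. intros i _.
  assert (Hi : Rabs (app n T x i) <= rsum n (fun j => Rabs (T i j))).
  { eapply Rle_trans; [apply Rabs_rsum_le|]. apply rsum_le. intros j Hj.
    rewrite Rabs_mult. pose proof (coord_sq_le_inner n x j Hj).
    pose proof (Rabs_pos (T i j)).
    assert (Rabs (x j) <= 1) by (apply Rabs_le; nra). nra. }
  pose proof (Rabs_pos (app n T x i)).
  rewrite <- (Rabs_pos_eq (app n T x i * app n T x i)) by nra. rewrite Rabs_mult. nra.
Qed.

Lemma opnorm_is_lub n T : (1 <= n)%nat ->
  is_lub (fun y => exists x, vnorm n x = 1 /\ y = vnorm n (app n T x)) (opnorm n T).
Proof.
  intros Hn. unfold opnorm. apply epsilon_spec.
  destruct (completeness (fun y => exists x, vnorm n x = 1 /\ y = vnorm n (app n T x)))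
    as [m Hm]; [| | now exists m].
  - destruct (app_sq_bounded n T) as [C HC]. exists (sqrt C).
    intros y [x [Hx ->]]. apply sqrt_le_1_alt, HC. now apply vnorm_eq1.
  - destruct (exists_unit_vec n Hn) as [x Hx].
    exists (vnorm n (app n T x)), x. split; [now apply vnorm_eq1 | reflexivity].
Qed.

Lemma vnorm_app_le_opnorm n T x : (1 <= n)%nat -> inner n x x = 1 ->
  vnorm n (app n T x) <= opnorm n T.
Proof.
  intros Hn Hx. apply (opnorm_is_lub n T Hn). exists x. split; [now apply vnorm_eq1 | reflexivity].
Qed.

Lemma opnorm_nonneg n T : (1 <= n)%nat -> 0 <= opnorm n T.
Proof.
  intros Hn. destruct (exists_unit_vec n Hn) as [x Hx].
  eapply Rle_trans; [apply (vnorm_nonneg n (app n T x)) | now apply vnorm_app_le_opnorm].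
Qed.

Lemma app_sq_le_opnorm n T x : (1 <= n)%nat -> inner n x x = 1 ->
  inner n (app n T x) (app n T x) <= opnorm n T ^ 2.
Proof.
  intros Hn Hx. rewrite <- vnorm_sq.
  pose proof (vnorm_app_le_opnorm n T x Hn Hx). pose proof (vnorm_nonneg n (app n T x)). nra.
Qed.

Lemma is_lub_approx E m e : is_lub E m -> 0 < e -> exists y, E y /\ m - e < y.
Proof.
  intros [_ Hleast] He. apply NNPP. intros Hno.
  assert (m <= m - e) by (apply Hleast; intros y Hy; apply Rnot_lt_le; intros Hlt; eauto).
  lra.
Qed.

Lemma opnorm_approx n T d : (1 <= n)%nat -> 0 < d ->
  exists x, inner n x x = 1 /\ opnorm n T ^ 2 - d < inner n (app n T x) (app n T x).
Proof.
  intros Hn Hd. pose proof (opnorm_nonneg n T Hn) as Ho. set (o := opnorm n T) in *.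
  destruct (Req_dec o 0) as [Ho0|Ho0].
  - destruct (exists_unit_vec n Hn) as [x Hx]. exists x. split; [exact Hx|].
    rewrite Ho0. pose proof (inner_self_nonneg n (app n T x)). nra.
  - set (e := Rmin o (d / (2 * o))).
    assert (He : 0 < e) by (apply Rmin_glb_lt; [lra | apply Rdiv_lt_0_compat; lra]).
    assert (Heo : e <= o) by apply Rmin_l.
    assert (Hed : 2 * o * e <= d).
    { assert (Hmin : e <= d / (2 * o)) by apply Rmin_r.
      apply (Rmult_le_compat_l (2 * o)) in Hmin; [|lra].
      replace (2 * o * (d / (2 * o))) with d in Hmin by (field; lra). exact Hmin. }
    destruct (is_lub_approx _ _ e (opnorm_is_lub n T Hn) He) as [y [[x [Hx ->]] Hy]].
    fold o in Hy. exists x. split; [now apply vnorm_eq1|]. rewrite <- vnorm_sq.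
    assert (Hsq : (o - e) * (o - e) < vnorm n (app n T x) * vnorm n (app n T x))
      by (apply Rmult_le_0_lt_compat; lra).
    nra.
Qed.

Lemma opnorm_mscale n l A : (1 <= n)%nat -> opnorm n (mscale l A) = Rabs l * opnorm n A.
Proof.
  intros Hn. destruct (opnorm_is_lub n A Hn) as [UA LA].
  destruct (opnorm_is_lub n (mscale l A) Hn) as [US LS].
  pose proof (opnorm_nonneg n A Hn). pose proof (Rabs_pos l).
  apply Rle_antisym.
  - apply LS. intros y [x [Hx ->]]. rewrite vnorm_mscale.
    apply Rmult_le_compat_l; [lra|]. apply UA. eauto.
  - destruct (Req_dec l 0) as [->|Hl].
    { rewrite Rabs_R0, Rmult_0_l. now apply opnorm_nonneg. }
    assert (Hl' : 0 < Rabs l) by now apply Rabs_pos_lt.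
    assert (opnorm n A <= opnorm n (mscale l A) / Rabs l).
    { apply LA. intros y [x [Hx ->]].
      apply (Rmult_le_reg_l (Rabs l)); [lra|].
      replace (Rabs l * (opnorm n (mscale l A) / Rabs l)) with (opnorm n (mscale l A))
        by (field; lra).
      rewrite <- vnorm_mscale. apply US. eauto. }
    replace (opnorm n (mscale l A)) with (Rabs l * (opnorm n (mscale l A) / Rabs l))
      by (field; lra).
    now apply Rmult_le_compat_l.
Qed.

Lemma inv_sqrt_sq r : 0 < r -> / sqrt r * / sqrt r * r = 1.
Proof.
  intros Hr. rewrite <- Rinv_mult, sqrt_sqrt by lra. field. lra.
Qed.

Lemma opnorm_bound n T x : (1 <= n)%nat ->
  inner n (app n T x) (app n T x) <= opnorm n T ^ 2 * inner n x x.
Proof.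
  intros Hn. pose proof (inner_self_nonneg n x) as Hr.
  destruct (Req_dec (inner n x x) 0) as [H0|H0].
  - assert (Happ : forall i, app n T x i = 0).
    { intros i. rewrite <- (rsum_zero n). apply rsum_ext. intros j Hj.
      pose proof (coord_sq_le_inner n x j Hj). assert (x j = 0) as -> by nra. ring. }
    unfold inner at 1. rewrite (rsum_ext n _ (fun _ => 0)), rsum_zero, H0; [lra|].
    intros i _. rewrite Happ. ring.
  - set (s := / sqrt (inner n x x)).
    assert (Hs : s * s * inner n x x = 1) by (apply inv_sqrt_sq; lra).
    pose proof (app_sq_le_opnorm n T (vscal s x) Hn) as H.
    rewrite app_scal, !inner_scal in H. specialize (H Hs).
    rewrite <- (Rmult_1_l (inner n (app n T x) (app n T x))), <- Hs.
    replace (s * s * inner n x x * inner n (app n T x) (app n T x))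
      with (s * s * inner n (app n T x) (app n T x) * inner n x x) by ring.
    apply Rmult_le_compat_r; lra.
Qed.

Definition strictly_increasing (phi : nat -> nat) : Prop :=
  forall a b, (a < b)%nat -> (phi a < phi b)%nat.

Lemma strictly_increasing_S phi :
  (forall k, (phi k < phi (S k))%nat) -> strictly_increasing phi.
Proof.
  intros H a b Hab. induction Hab as [|b Hab IH]; [apply H|]. specialize (H b). lia.
Qed.

Lemma strictly_increasing_ge phi : strictly_increasing phi -> forall k, (k <= phi k)%nat.
Proof. intros H k. induction k as [|k IH]; [lia|]. specialize (H k (S k)). lia. Qed.

Lemma Un_cv_const c : Un_cv (fun _ => c) c.
Proof. intros e He. exists O. intros k _. unfold Rdist. now rewrite Rminus_diag, Rabs_R0. Qed.

Lemma Un_cv_subseq u l phi :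
  Un_cv u l -> strictly_increasing phi -> Un_cv (fun k => u (phi k)) l.
Proof.
  intros Hu Hphi e He. destruct (Hu e He) as [N HN]. exists N. intros k Hk.
  apply HN. pose proof (strictly_increasing_ge phi Hphi k). lia.
Qed.

Lemma bounded_seq_cv_subseq (u : nat -> R) : (forall k, Rabs (u k) <= 1) ->
  exists phi l, strictly_increasing phi /\ Un_cv (fun k => u (phi k)) l.
Proof.
  intros Hb.
  destruct (Bolzano_Weierstrass u (fun c => -1 <= c <= 1) (compact_P3 (-1) 1)) as [l Hl].
  { intros k. specialize (Hb k). unfold Rabs in Hb. destruct Rcase_abs in Hb; lra. }
  assert (Hclose : forall Nk : nat * nat,
             exists p, (fst Nk <= p)%nat /\ Rabs (u p - l) < / (INR (snd Nk) + 1)).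
  { intros [N k]. destruct (Hl (fun y => Rabs (y - l) < RinvN k) N) as [p Hp].
    - exists (RinvN k). now intros y Hy.
    - exists p. exact Hp. }
  destruct (choice _ Hclose) as [pick Hpick].
  set (phi := fix phi (k : nat) : nat :=
         match k with O => pick (O, O) | S k' => pick (S (phi k'), S k') end).
  assert (Hphi : forall k, Rabs (u (phi k) - l) < / (INR k + 1)).
  { intros [|k]; [exact (proj2 (Hpick (O, O))) | exact (proj2 (Hpick (S (phi k), S k)))]. }
  exists phi, l. split.
  - apply strictly_increasing_S. intros k. exact (proj1 (Hpick (S (phi k), S k))).
  - intros e He. destruct (RinvN_cv He) as [N HN]. exists N. intros k Hk.
    specialize (HN k Hk). unfold Rdist in *. simpl in HN.
    rewrite Rminus_0_r, Rabs_pos_eq in HN by (left; apply RinvN_pos).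
    specialize (Hphi k). lra.
Qed.

Definition vec_cv (n : nat) (u : nat -> vec) (L : vec) : Prop :=
  forall i, (i < n)%nat -> Un_cv (fun k => u k i) (L i).

Lemma unit_seq_cv_subseq n (u : nat -> vec) : (forall k, inner n (u k) (u k) = 1) ->
  exists phi L, strictly_increasing phi /\ vec_cv n (fun k => u (phi k)) L.
Proof.
  intros Hu.
  assert (Hb : forall k i, (i < n)%nat -> Rabs (u k i) <= 1).
  { intros k i Hi. pose proof (coord_sq_le_inner n (u k) i Hi). rewrite Hu in *.
    apply Rabs_le. nra. }
  clear Hu. induction n as [|m IH].
  - exists (fun k => k), (fun _ => 0). split; [now intros a b | intros i Hi; lia].
  - destruct IH as [phi [L [Hphi HL]]]; [intros; apply Hb; lia|].
    destruct (bounded_seq_cv_subseq (fun k => u (phi k) m)) as [psi [l [Hpsi Hl]]];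
      [intros; apply Hb; lia|].
    exists (fun k => phi (psi k)), (fun i => if Nat.eq_dec i m then l else L i). split.
    + intros a b Hab. now apply Hphi, Hpsi.
    + intros i Hi. destruct (Nat.eq_dec i m) as [->|Hne]; [exact Hl|].
      apply (Un_cv_subseq (fun k => u (phi k) i)); [apply HL; lia | exact Hpsi].
Qed.

Lemma Un_cv_rsum n (f : nat -> nat -> R) (L : nat -> R) :
  (forall i, (i < n)%nat -> Un_cv (fun k => f k i) (L i)) ->
  Un_cv (fun k => rsum n (f k)) (rsum n L).
Proof.
  induction n as [|n IH]; intros H; simpl; [apply Un_cv_const|].
  apply CV_plus; [apply IH; intros; apply H | apply H]; lia.
Qed.

Lemma vec_cv_app n T u L : vec_cv n u L -> forall i, Un_cv (fun k => app n T (u k) i) (app n T L i).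
Proof.
  intros H i. apply (Un_cv_rsum n (fun k j => T i j * u k j)).
  intros j Hj. apply CV_mult; [apply Un_cv_const | now apply H].
Qed.

Lemma Un_cv_inner n u v U V : vec_cv n u U -> vec_cv n v V ->
  Un_cv (fun k => inner n (u k) (v k)) (inner n U V).
Proof.
  intros Hu Hv. apply (Un_cv_rsum n (fun k j => u k j * v k j)).
  intros j Hj. apply CV_mult; [apply Hu | apply Hv]; exact Hj.
Qed.

Definition norming (n : nat) (T : mat) (x : vec) : Prop :=
  inner n x x = 1 /\ inner n (app n T x) (app n T x) = opnorm n T ^ 2.

Lemma MT_norming n T x : (1 <= n)%nat -> MT n T x <-> norming n T x.
Proof.
  intros Hn. unfold MT, norming. rewrite vnorm_eq1, <- (vnorm_sq n (app n T x)).
  pose proof (opnorm_nonneg n T Hn). pose proof (vnorm_nonneg n (app n T x)).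
  split; intros [H1 H2]; split; auto.
  - now rewrite H2.
  - apply Rsqr_inj; auto. now rewrite !Rsqr_pow2.
Qed.

Lemma maximizing_seq_limit n T B C (x : nat -> vec) (d : nat -> R) m :
  (1 <= n)%nat -> Un_cv d 0 -> (forall k, inner n (x k) (x k) = 1) ->
  (forall k, opnorm n T ^ 2 - d k <= inner n (app n T (x k)) (app n T (x k))) ->
  (forall k, m - d k <= inner n (app n B (x k)) (app n C (x k))) ->
  exists L, norming n T L /\ m <= inner n (app n B L) (app n C L).
Proof.
  intros Hn Hd Hx HT HBC.
  destruct (unit_seq_cv_subseq n x Hx) as [phi [L [Hphi HL]]].
  assert (Hlim : forall B C m, (forall k, m - d k <= inner n (app n B (x k)) (app n C (x k))) ->
                 m <= inner n (app n B L) (app n C L)).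
  { intros B' C' m' Hm. apply Rle_cv_lim with (Un := fun k => m' - d (phi k))
      (Vn := fun k => inner n (app n B' (x (phi k))) (app n C' (x (phi k)))); [intros; apply Hm| |].
    - pose proof (CV_minus _ _ _ _ (Un_cv_const m') (Un_cv_subseq d 0 phi Hd Hphi)) as Hcv.
      now rewrite Rminus_0_r in Hcv.
    - apply Un_cv_inner; intros i _; now apply vec_cv_app. }
  assert (HL1 : inner n L L = 1).
  { apply (UL_sequence (fun k => inner n (x (phi k)) (x (phi k)))); [now apply Un_cv_inner|].
    intros e He. exists O. intros k _. unfold Rdist. rewrite Hx, Rminus_diag, Rabs_R0. lra. }
  exists L. split; [split; [exact HL1|] | now apply Hlim].
  apply Rle_antisym; [now apply app_sq_le_opnorm | now apply Hlim].
Qed.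

Definition attains_norm (n : nat) (T : mat) (x : vec) : Prop :=
  inner n (app n T x) (app n T x) = opnorm n T ^ 2 * inner n x x.

Lemma norming_attains_norm n T x : norming n T x -> attains_norm n T x.
Proof. intros [H1 H2]. unfold attains_norm. rewrite H1, H2. ring. Qed.

(* [attains_norm] is the zero set of the positive semidefinite form
   [|T|^2 |x|^2 - |Tx|^2], hence a linear subspace. *)
Lemma attains_norm_lc n T a x b y : (1 <= n)%nat ->
  attains_norm n T x -> attains_norm n T y -> attains_norm n T (vlc a x b y).
Proof.
  unfold attains_norm. intros Hn Hx Hy. set (mu := opnorm n T ^ 2) in *.
  set (B := mu * inner n x y - inner n (app n T x) (app n T y)).
  assert (HB : forall t, 0 <= 2 * t * B).
  { intros t. pose proof (opnorm_bound n T (vlc 1 x t y) Hn) as H.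
    rewrite app_lc, !inner_lc_lc in H. fold mu in H. unfold B. nra. }
  assert (B = 0) by (pose proof (HB 1); pose proof (HB (-1)); lra).
  rewrite app_lc, !inner_lc_lc. unfold B in *. nra.
Qed.

Lemma norming_normalize n T z : 0 < inner n z z -> attains_norm n T z ->
  norming n T (vscal (/ sqrt (inner n z z)) z).
Proof.
  unfold attains_norm. intros Hz HTz. pose proof (inv_sqrt_sq _ Hz) as Hs.
  split; rewrite ?app_scal, inner_scal; [exact Hs|]. rewrite HTz.
  transitivity (opnorm n T ^ 2 * (/ sqrt (inner n z z) * / sqrt (inner n z z) * inner n z z));
    [ring | rewrite Hs; ring].
Qed.

Lemma norming_quad_zero_acute n T A x y : (1 <= n)%nat ->
  norming n T x -> norming n T y -> 0 <= inner n x y ->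
  0 < inner n (app n T x) (app n A x) -> inner n (app n T y) (app n A y) < 0 ->
  exists z, norming n T z /\ inner n (app n T z) (app n A z) = 0.
Proof.
  intros Hn Hx Hy Hxy Hqx Hqy.
  set (q w := inner n (app n T w) (app n A w)). change (0 < q x) in Hqx. change (q y < 0) in Hqy.
  set (r := inner n (app n T x) (app n A y) + inner n (app n T y) (app n A x)).
  assert (Hq : forall t, q (vlc (1 - t) x t y) = (1 - t) ^ 2 * q x + t * (1 - t) * r + t ^ 2 * q y).
  { intros t. unfold q, r. rewrite !app_lc, inner_lc_l, !inner_lc_r. ring. }
  destruct (IVT (fun t => - ((1 - t) ^ 2 * q x + t * (1 - t) * r + t ^ 2 * q y)) 0 1)
    as [t [Ht Hqt]]; [apply derivable_continuous; reg | lra | simpl; lra | simpl; lra |].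
  rewrite <- Hq in Hqt. set (z := vlc (1 - t) x t y) in Hqt.
  assert (Hz : 0 < inner n z z).
  { unfold z. rewrite inner_lc_lc, (proj1 Hx), (proj1 Hy).
    assert (0 <= (1 - t) * t * inner n x y) by (apply Rmult_le_pos; nra). nra. }
  exists (vscal (/ sqrt (inner n z z)) z). split.
  - apply norming_normalize; [exact Hz|].
    apply attains_norm_lc; [exact Hn | now apply norming_attains_norm ..].
  - rewrite !app_scal, inner_scal. change (inner n (app n T z) (app n A z)) with (q z). replace (q z) with 0 by lra. ring.
Qed.

Lemma norming_quad_zero n T A x y : (1 <= n)%nat -> norming n T x -> norming n T y ->
  0 < inner n (app n T x) (app n A x) -> inner n (app n T y) (app n A y) < 0 ->
  exists z, norming n T z /\ inner n (app n T z) (app n A z) = 0.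
Proof.
  intros Hn Hx Hy Hqx Hqy. destruct (Rle_lt_dec 0 (inner n x y)) as [Hxy|Hxy].
  - now apply (norming_quad_zero_acute n T A x y).
  - apply (norming_quad_zero_acute n T A x (vscal (-1) y)); auto.
    + destruct Hy as [Hy1 Hy2]. split; rewrite ?app_scal, inner_scal; lra.
    + rewrite inner_scal_r. lra.
    + rewrite !app_scal, inner_scal. lra.
Qed.

Lemma BJ_eps_of_norming n eps T A x : (1 <= n)%nat -> 0 <= eps -> norming n T x ->
  Rabs (inner n (app n T x) (app n A x)) <= eps * opnorm n T * opnorm n A ->
  BJ_eps n eps T A.
Proof.
  intros Hn Heps [Hx HTx] Hq l. rewrite opnorm_mscale by exact Hn.
  pose proof (app_sq_le_opnorm n (madd T (mscale l A)) x Hn Hx) as H.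
  rewrite app_madd_mscale, inner_lc_lc, HTx in H.
  set (q := inner n (app n T x) (app n A x)) in *.
  assert (Hlq : - (Rabs l * (eps * opnorm n T * opnorm n A)) <= l * q).
  { pose proof (Rle_abs (- (l * q))). rewrite Rabs_Ropp, Rabs_mult in *.
    pose proof (Rmult_le_compat_l _ _ _ (Rabs_pos l) Hq). lra. }
  pose proof (inner_self_nonneg n (app n A x)). apply Rle_ge. nra.
Qed.

(* Algebra behind the forward direction: [a = |Tx|^2 <= mu = |T|^2], [b = |Ax|^2 <= nA = |A|^2],
   [q = <Tx, Ax>], [o2 = |T + tA|^2] and [x] maximises [|(T + tA) x|^2] up to [t^2]. *)
Lemma perturbation_bounds t a b q mu nA c o2 :
  0 < t <= 1 -> 0 <= a <= mu -> 0 <= b <= nA -> 2 * q <= a + b -> 0 <= c ->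
  mu - 2 * c * t <= o2 -> o2 - t ^ 2 < a + 2 * t * q + t ^ 2 * b ->
  mu - t * (2 * c + 1 + mu + 2 * nA) <= a /\ - c - t * (2 * c + 1 + mu + 2 * nA) <= q.
Proof.
  intros Ht Ha Hb Hq Hc Ho Hx.
  assert (t ^ 2 * b <= t ^ 2 * nA) by (apply Rmult_le_compat_l; nra).
  assert (t ^ 2 <= t) by nra.
  assert (t * (2 * q + 2 * c + t * (1 + nA)) > 0) by nra.
  assert (Hq' : 0 < 2 * q + 2 * c + t * (1 + nA)).
  { apply (Rmult_lt_reg_l t); lra. }
  split; nra.
Qed.

Lemma BJ_eps_norming_lower n eps T A : (1 <= n)%nat -> 0 <= eps -> BJ_eps n eps T A ->
  exists x, norming n T x /\
    - (eps * opnorm n T * opnorm n A) <= inner n (app n T x) (app n A x).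
Proof.
  intros Hn Heps HBJ.
  pose proof (opnorm_nonneg n T Hn). pose proof (opnorm_nonneg n A Hn).
  set (c := eps * opnorm n T * opnorm n A).
  assert (Hc : 0 <= c) by (unfold c; repeat apply Rmult_le_pos; lra).
  set (K := 2 * c + 1 + opnorm n T ^ 2 + 2 * opnorm n A ^ 2).
  set (t k := / (INR k + 1)).
  destruct (choice (fun k x => inner n x x = 1 /\
      opnorm n (madd T (mscale (t k) A)) ^ 2 - t k ^ 2 <
      inner n (app n (madd T (mscale (t k) A)) x) (app n (madd T (mscale (t k) A)) x)))
    as [x Hx].
  { intros k. apply opnorm_approx; [exact Hn|]. pose proof (RinvN_pos k). unfold t. nra. }
  assert (Hk : forall k, opnorm n T ^ 2 - t k * K <= inner n (app n T (x k)) (app n T (x k)) /\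
                         - c - t k * K <= inner n (app n T (x k)) (app n A (x k))).
  { intros k. destruct (Hx k) as [Hxk Hmax].
    rewrite app_madd_mscale, inner_lc_lc in Hmax.
    assert (Ht : 0 < t k <= 1).
    { unfold t. pose proof (pos_INR k). split; [apply RinvN_pos|].
      rewrite <- Rinv_1. apply Rinv_le_contravar; lra. }
    specialize (HBJ (t k)). rewrite opnorm_mscale, Rabs_pos_eq in HBJ by (exact Hn || lra).
    pose proof (Rabs_inner_le n (app n T (x k)) (app n A (x k))) as Hq.
    pose proof (Rle_abs (inner n (app n T (x k)) (app n A (x k)))).
    apply perturbation_bounds with (b := inner n (app n A (x k)) (app n A (x k)))
      (o2 := opnorm n (madd T (mscale (t k) A)) ^ 2);
      try split; auto using inner_self_nonneg, app_sq_le_opnorm; unfold c in *; lra. }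
  assert (Hd : Un_cv (fun k => t k * K) 0).
  { rewrite <- (Rmult_0_l K). apply CV_mult; [exact RinvN_cv | apply Un_cv_const]. }
  destruct (maximizing_seq_limit n T T A x (fun k => t k * K) (- c) Hn Hd)
    as [L [HL Hq]]; [apply Hx | apply Hk | apply Hk |].
  now exists L.
Qed.

Lemma BJ_eps_mscale_opp n eps T A : BJ_eps n eps T A -> BJ_eps n eps T (mscale (-1) A).
Proof.
  intros HBJ l.
  replace (mscale l (mscale (-1) A)) with (mscale (- l) A)
    by (do 2 (apply functional_extensionality; intro); unfold mscale; ring).
  apply HBJ.
Qed.

Lemma BJ_eps_iff_norming n eps T A : (1 <= n)%nat -> 0 <= eps ->
  BJ_eps n eps T A <->
  exists x, norming n T x /\
    Rabs (inner n (app n T x) (app n A x)) <= eps * opnorm n T * opnorm n A.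
Proof.
  intros Hn Heps. split; [|intros [x [Hx Hq]]; now apply (BJ_eps_of_norming n eps T A x)].
  intros HBJ. set (c := eps * opnorm n T * opnorm n A).
  assert (Hc : 0 <= c).
  { unfold c. pose proof (opnorm_nonneg n T Hn). pose proof (opnorm_nonneg n A Hn).
    repeat apply Rmult_le_pos; lra. }
  destruct (BJ_eps_norming_lower n eps T A Hn Heps HBJ) as [xp [Hxp Hqp]].
  destruct (BJ_eps_norming_lower n eps T (mscale (-1) A) Hn Heps (BJ_eps_mscale_opp _ _ _ _ HBJ))
    as [xm [Hxm Hqm]].
  rewrite opnorm_mscale, app_mscale, inner_scal_r in Hqm by exact Hn.
  replace (Rabs (-1)) with 1 in Hqm by (rewrite Rabs_left; lra). rewrite Rmult_1_l in Hqm.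
  fold c in Hqp, Hqm.
  destruct (Rle_dec (inner n (app n T xp) (app n A xp)) c) as [Hp|Hp].
  { exists xp. split; [exact Hxp|]. now apply Rabs_le. }
  destruct (Rle_dec (- c) (inner n (app n T xm) (app n A xm))) as [Hm|Hm].
  { exists xm. split; [exact Hxm|]. apply Rabs_le. lra. }
  (* otherwise [<Tx, Ax>] changes sign on M_T *)
  destruct (norming_quad_zero n T A xp xm) as [z [Hz Hqz]]; auto; [lra | lra |].
  exists z. split; [exact Hz|]. rewrite Hqz, Rabs_R0. exact Hc.
Qed.

Theorem mainTheorem4 (n : nat) (eps : R) (T : mat)
  (Hn : (1 <= n)%nat) (Heps : 0 <= eps < 1) :
  (forall A : mat,
     BJ_eps n eps T A <->
     exists x : vec, MT n T x /\
       Rabs (inner n (app n T x) (app n A x)) <= eps * opnorm n T * opnorm n A)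
  /\
  (forall A : mat,
     (forall x : vec, MT n T x -> MT n A x) ->
     (BJ_eps n eps T A <->
      exists x : vec, MT n T x /\ iperp_eps n eps (app n T x) (app n A x))).
Proof.
  assert (Hpart1 : forall A, BJ_eps n eps T A <->
            exists x, MT n T x /\
              Rabs (inner n (app n T x) (app n A x)) <= eps * opnorm n T * opnorm n A).
  { intros A. rewrite BJ_eps_iff_norming by (exact Hn || lra).
    split; intros [x [Hx Hq]]; exists x; split; auto; now apply (MT_norming n T x Hn). }
  split; [exact Hpart1|].
  intros A HTA. rewrite Hpart1. unfold iperp_eps.
  split; intros [x [Hx Hq]]; exists x; split; auto;
    destruct (HTA x Hx) as [_ HA]; destruct Hx as [_ HT].
  - rewrite HA, HT. exact Hq.
  - rewrite HA, HT in Hq. exact Hq.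
Qed.
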